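(* Let $G$ be a group and let $S$ be a finite subset of $G$. Let $F$ be a subset of $G$ that is finite or cofinite (i.e. $G\setminus F$ is finite), such that $F\cap S^{-1}=\{1\}$. Then $|(FS)\setminus F|\ge|S|-1$.
   Context: $FS=\{xy : x\in F,\ y\in S\}$ and $S^{-1}=\{s^{-1}: s\in S\}$; $1$ is the identity of $G$. *)

From HB Require Import structures.
From mathcomp Require Import all_boot monoid.
From mathcomp Require Import boolp classical_sets cardinality.
From mathcomp Require Import finmap.

Set Implicit Arguments.
Unset Strict Implicit.
Unset Printing Implicit Defensive.

Local Open Scope classical_set_scope.
Local Open Scope group_scope.

Definition setmulg (G : groupType) (F S : set G) : set G :=
  [set z | exists2 x, F x & exists2 y, S y & z = x * y].

Definition setinvg (G : groupType) (S : set G) : set G :=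
  [set z | exists2 s, S s & z = s^-1].

From HB Require Import structures.
From mathcomp Require Import all_boot monoid.
From mathcomp Require Import boolp classical_sets cardinality.
From mathcomp Require Import finmap.
From mathcomp Require Import zify.

(* Scherk's theorem: if 1 lies in the finite sets A and B and ab = 1 with a in A,
   b in B forces a = b = 1, then |AB| >= |A| + |B| - 1. It follows by repeating
   Kemperman's transform until A and B meet only in 1, where A \cup B \subseteq AB
   gives the bound. For F finite apply it to (F, S), as F \subseteq FS. For F
   cofinite apply it to (1 + D, S^-1), where D is the complement of F \cup FS:
   this pair again satisfies the condition and its product lies in 1 + (G \ F),
   so |D| + |S| <= |G \ F| + 1, while |G \ F| = |D| + |FS \ F|. *)

Local Open Scope classical_set_scope.
Local Open Scope group_scope.

Lemma lex_mul_addn_lt (w k k' r r' : nat) : (r' <= w)%N ->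
  (k' < k)%N \/ k' = k /\ (r' < r)%N -> (k' * w.+1 + r' < k * w.+1 + r)%N.
Proof.
move=> r'w [kk'|[-> //]]; last by rewrite ltn_add2l.
have : (k'.+1 * w.+1 <= k * w.+1)%N by rewrite leq_mul2r kk' orbT.
rewrite mulSn; lia.
Qed.

Section Scherk.
Local Open Scope fset_scope.
Variable G : groupType.
Implicit Types (A B : {fset G}) (g : G).

Definition mulfs A B : {fset G} := [fset a * b | a in A, b in B].

Lemma mulfsP A B z :
  reflect (exists2 a, a \in A & exists2 b, b \in B & z = a * b) (z \in mulfs A B).
Proof. exact: imfset2P. Qed.

Lemma mem_mulfs A B a b : a \in A -> b \in B -> a * b \in mulfs A B.
Proof. by move=> aA bB; apply/mulfsP; exists a => //; exists b. Qed.

Lemma mulfs_sub A B A' B' :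
  (forall a b, a \in A' -> b \in B' -> a * b \in mulfs A B) ->
  mulfs A' B' `<=` mulfs A B.
Proof. by move=> AB'; apply/fsubsetP=> _ /mulfsP[a aA' [b bB' ->]]; apply: AB'. Qed.

Lemma card_fset_mulr A g : #|` [fset a * g | a in A]| = #|` A|.
Proof. by rewrite card_imfset //; apply: mulIg. Qed.

Lemma card_fset_mull A g : #|` [fset g * a | a in A]| = #|` A|.
Proof. by rewrite card_imfset //; apply: mulgI. Qed.

Lemma cardfsU_disjoint A B : [disjoint A & B] -> #|` A `|` B| = (#|` A| + #|` B|)%N.
Proof. by rewrite -fsetI_eq0 -cardfsUI => /eqP->; rewrite cardfs0 addn0. Qed.

Definition scherk_pair A B := [/\ 1 \in A, 1 \in B &
  forall a b, a \in A -> b \in B -> a * b = 1 -> a = 1].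

Lemma scherk_pair_subl A B : scherk_pair A B -> A `<=` mulfs A B.
Proof. by case=> _ B1 _; apply/fsubsetP=> a aA; rewrite -[a]mulg1 mem_mulfs. Qed.

Lemma scherk_pair_subr A B : scherk_pair A B -> B `<=` mulfs A B.
Proof. by case=> A1 _ _; apply/fsubsetP=> b bB; rewrite -[b]mul1g mem_mulfs. Qed.

Lemma scherk_setI1 A B : scherk_pair A B ->
  (forall g, g \in A -> g \in B -> g = 1) ->
  (#|` A| + #|` B| <= #|` mulfs A B| + 1)%N.
Proof.
move=> AB AIB1; have [A1 B1 _] := AB.
have AIB : A `&` B = [fset 1].
  apply/fsetP=> x; rewrite in_fsetI in_fset1.
  by apply/andP/eqP=> [[]|->]; [apply: AIB1|].
have UAB : #|` A `|` B| <= #|` mulfs A B|.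
  by rewrite fsubset_leq_card // fsubUset scherk_pair_subl ?scherk_pair_subr.
by rewrite -cardfsUI AIB cardfs1 leq_add2r.
Qed.

Section Transform.
Variables (A B : {fset G}) (g : G).
Hypotheses (AB : scherk_pair A B) (gA : g \in A) (gB : g \in B) (g1 : g != 1).

Let P := [fset a in A | a * g \notin A].
Let Q := [fset b in B | g * b \notin B].

Let A_plus := A `|` [fset a * g | a in P].
Let B_minus := B `\` Q.
Let A_minus := A `\` P.
Let B_plus := B `|` [fset g * b | b in Q].

Lemma invg_notinl : g^-1 \notin A.
Proof.
apply/negP=> gVA; have [_ _ AB1] := AB.
by move/eqP: (AB1 _ _ gVA gB (mulVg g)); rewrite invg_eq1 (negbTE g1).
Qed.

Lemma invg_notinr : g^-1 \notin B.
Proof.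
apply/negP=> gVB; have [_ _ AB1] := AB.
by move/eqP: (AB1 _ _ gA gVB (mulgV g)); rewrite (negbTE g1).
Qed.

(* If right translation by g mapped A into itself it would permute A, so 1 = a g
   for some a in A, i.e. g^-1 \in A. *)
Lemma card_P_gt0 : (0 < #|` P|)%N.
Proof.
rewrite cardfs_gt0; apply: contraT => /negPn/eqP P0.
have AgA : [fset a * g | a in A] `<=` A.
  apply/fsubsetP=> _ /imfsetP[a /= aA ->]; apply: contraT => agA.
  have : a \in P by rewrite !inE aA agA.
  by rewrite P0 inE.
have AgE : [fset a * g | a in A] = A.
  by apply/eqP; rewrite eqEfcard AgA card_fset_mulr leqnn.
have [A1 _ _] := AB; move: A1; rewrite -AgE => /imfsetP[a /= aA /esym/mulg1_eq ga].
by move: invg_notinl; rewrite -ga invgK aA.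
Qed.

Lemma card_A_plus : #|` A_plus| = (#|` A| + #|` P|)%N.
Proof.
rewrite cardfsU_disjoint ?card_fset_mulr //.
apply/fdisjointP=> x xA; apply/imfsetP=> -[a /=].
by rewrite !inE => /andP[_ /negP agA] xE; apply: agA; rewrite -xE.
Qed.

Lemma card_B_plus : #|` B_plus| = (#|` B| + #|` Q|)%N.
Proof.
rewrite cardfsU_disjoint ?card_fset_mull //.
apply/fdisjointP=> x xB; apply/imfsetP=> -[b /=].
by rewrite !inE => /andP[_ /negP gbB] xE; apply: gbB; rewrite -xE.
Qed.

Lemma card_B_minus : #|` B_minus| = (#|` B| - #|` Q|)%N.
Proof. by rewrite cardfsDS //; apply/fsubsetP=> b; rewrite inE => /andP[]. Qed.

Lemma card_A_minus : #|` A_minus| = (#|` A| - #|` P|)%N.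
Proof. by rewrite cardfsDS //; apply/fsubsetP=> a; rewrite inE => /andP[]. Qed.

Lemma mem_B_minus b : b \in B_minus -> b \in B /\ g * b \in B.
Proof.
rewrite in_fsetD => /andP[bQ bB]; split=> //.
by apply: contraNT bQ => gbB; rewrite !inE bB gbB.
Qed.

Lemma mem_A_minus a : a \in A_minus -> a \in A /\ a * g \in A.
Proof.
rewrite in_fsetD => /andP[aP aA]; split=> //.
by apply: contraNT aP => agA; rewrite !inE aA agA.
Qed.

Lemma mem_A_plus x : x \in A_plus -> x \in A \/ exists2 a, a \in A & x = a * g.
Proof.
rewrite in_fsetU => /orP[xA|/imfsetP[a /=]]; first by left.
by rewrite !inE => /andP[aA _] ->; right; exists a.
Qed.

Lemma mem_B_plus y : y \in B_plus -> y \in B \/ exists2 b, b \in B & y = g * b.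
Proof.
rewrite in_fsetU => /orP[yB|/imfsetP[b /=]]; first by left.
by rewrite !inE => /andP[bB _] ->; right; exists b.
Qed.

Lemma scherk_pair_plus_minus : scherk_pair A_plus B_minus.
Proof.
have [A1 B1 AB1] := AB; split.
- by rewrite in_fsetU A1.
- by rewrite !inE B1 mulg1 gB.
move=> x y /mem_A_plus[xA|[a aA ->]] /mem_B_minus[yB gyB]; first exact: AB1.
rewrite -mulgA => agy1; have a1 := AB1 _ _ aA gyB agy1.
move: agy1; rewrite a1 mul1g => /mulg1_eq gVy.
by move: invg_notinr; rewrite gVy yB.
Qed.

Lemma scherk_pair_minus_plus : scherk_pair A_minus B_plus.
Proof.
have [A1 B1 AB1] := AB; split.
- by rewrite !inE A1 mul1g gA.
- by rewrite in_fsetU B1.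
move=> x y /mem_A_minus[xA xgA] /mem_B_plus[yB|[b bB ->]]; first exact: AB1.
rewrite mulgA => xgb1; move/mulg1_eq: (AB1 _ _ xgA bB xgb1) => xVg.
by move: invg_notinl; rewrite -xVg invgK xA.
Qed.

Lemma mulfs_plus_minus : mulfs A_plus B_minus `<=` mulfs A B.
Proof.
apply: mulfs_sub => x y /mem_A_plus[xA|[a aA ->]] /mem_B_minus[yB gyB].
  exact: mem_mulfs.
by rewrite -mulgA mem_mulfs.
Qed.

Lemma mulfs_minus_plus : mulfs A_minus B_plus `<=` mulfs A B.
Proof.
apply: mulfs_sub => x y /mem_A_minus[xA xgA] /mem_B_plus[yB|[b bB ->]].
  exact: mem_mulfs.
by rewrite mulgA mem_mulfs.
Qed.

(* Moving P g into A and Q out of B, or P out of A and g Q into B, keeps the pair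
   condition and shrinks the product; one of the two increases (|A| + |B|, |A|)
   lexicographically. *)
Lemma scherk_transform : exists A' B', [/\ scherk_pair A' B',
  mulfs A' B' `<=` mulfs A B &
  (#|` A| + #|` B| < #|` A'| + #|` B'|)%N \/
  (#|` A| + #|` B| = #|` A'| + #|` B'| /\ #|` A| < #|` A'|)%N].
Proof.
have P_gt0 := card_P_gt0.
have PA : (#|` P| <= #|` A|)%N by apply/fsubset_leq_card/fsubsetP=> a; rewrite inE => /andP[].
have QB : (#|` Q| <= #|` B|)%N by apply/fsubset_leq_card/fsubsetP=> b; rewrite inE => /andP[].
have [QP|PQ] := leqP #|` Q| #|` P|.
  exists A_plus, B_minus; split; [exact: scherk_pair_plus_minus|exact: mulfs_plus_minus|].
  rewrite card_A_plus card_B_minus; lia.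
exists A_minus, B_plus; split; [exact: scherk_pair_minus_plus|exact: mulfs_minus_plus|].
rewrite card_A_minus card_B_plus; left; lia.
Qed.

End Transform.

(* The measure encodes (|A| + |B|, |A|) lexicographically; both components
   are at most w since A and B lie in AB. *)
Lemma scherk_bounded w n A B : scherk_pair A B -> (#|` mulfs A B| <= w)%N ->
  ((2 * w - #|` A| - #|` B|) * w.+1 + (w - #|` A|) < n)%N ->
  (#|` A| + #|` B| <= #|` mulfs A B| + 1)%N.
Proof.
elim: n A B => // n IH A B AB ABw.
have card_le_w A' B' : scherk_pair A' B' -> mulfs A' B' `<=` mulfs A B ->
    (#|` A'| <= w /\ #|` B'| <= w)%N.
  move=> A'B' sub; have /fsubset_leq_card le := sub.
  have /fsubset_leq_card := scherk_pair_subl _ _ A'B'.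
  have /fsubset_leq_card := scherk_pair_subr _ _ A'B'; lia.
have [aw bw] := card_le_w A B AB (fsubset_refl _).
have [[g gA] /andP[/= gB g1]|] := pickP [pred x : A | (val x \in B) && (val x != 1)].
  have [A' [B' [A'B' sub grow]]] := scherk_transform _ _ _ AB gA gB g1.
  have [a'w b'w] := card_le_w A' B' A'B' sub.
  have subc := fsubset_leq_card sub.
  have lt_pot : ((2 * w - #|` A'| - #|` B'|) * w.+1 + (w - #|` A'|) <
          (2 * w - #|` A| - #|` B|) * w.+1 + (w - #|` A|))%N.
    by apply: lex_mul_addn_lt; [exact: leq_subr|case: grow => grow; [left|right]; lia].
  move=> /ltnSE/(leq_trans lt_pot)/(IH A' B' A'B' (leq_trans subc ABw)) IH'.
  have le_sum : (#|` A| + #|` B| <= #|` A'| + #|` B'|)%N by case: grow; lia.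
  by apply: leq_trans le_sum (leq_trans IH' _); rewrite leq_add2r.
move=> AIB _; apply: scherk_setI1 => // x xA xB.
by apply/eqP; apply: contraFT (AIB [` xA]) => x1 /=; rewrite xB x1.
Qed.

Theorem scherk A B : scherk_pair A B -> (#|` A| + #|` B| <= #|` mulfs A B| + 1)%N.
Proof. by move=> AB; apply: (scherk_bounded _ _ _ _ AB (leqnn _) (ltnSn _)). Qed.

Lemma scherk_mulfsD A B : scherk_pair A B -> (#|` B| - 1 <= #|` mulfs A B `\` A|)%N.
Proof.
move=> AB; rewrite cardfsDS ?scherk_pair_subl //.
have := scherk _ _ AB; lia.
Qed.

End Scherk.

Arguments mulfs {G}.
Arguments scherk_pair {G}.
Arguments scherk {G A B}.

Lemma fset_setP (T : choiceType) (A : set T) x :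
  finite_set A -> reflect (A x) (x \in fset_set A).
Proof. by move=> fA; rewrite in_fset_set //; apply: (iffP idP) => [/set_mem|/mem_set]. Qed.

Section ProductSets.
Context {G : groupType}.
Implicit Types F S : set G.

Lemma setI_setinvg_eq1 F S : F `&` setinvg S = [set 1] ->
  [/\ F 1, S 1 & forall s, S s -> F s^-1 -> s = 1].
Proof.
move=> FSV; have : (F `&` setinvg S) 1 by rewrite FSV.
case=> F1 [s Ss s1]; split=> // [|s' Ss' Fs'].
  by move/eqP: s1; rewrite eq_sym invg_eq1 => /eqP <-.
have : (F `&` setinvg S) s'^-1 by split=> //; exists s'.
by rewrite FSV => /= /eqP; rewrite invg_eq1 => /eqP.
Qed.

Lemma fset_set_setmulg {F S} : finite_set F -> finite_set S ->
  finite_set (setmulg F S) /\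
  fset_set (setmulg F S) = mulfs (fset_set F) (fset_set S).
Proof.
move=> fF fS; have sub : setmulg F S `<=` [set` mulfs (fset_set F) (fset_set S)].
  by move=> _ [x Fx [y Sy ->]]; apply: mem_mulfs; apply/fset_setP.
have fFS : finite_set (setmulg F S) by apply: sub_finite_set sub (finite_fset _).
split=> //; apply/fsetP=> z; apply/idP/idP => [/fset_setP-/(_ fFS)/sub //|].
case/mulfsP=> x /fset_setP-/(_ fF) Fx [y /fset_setP-/(_ fS) Sy ->].
by apply/fset_setP => //; exists x => //; exists y.
Qed.

Section BoundaryOfProduct.
Variables F S : set G.
Hypotheses (fS : finite_set S) (F1 : F 1) (S1 : S 1)
  (SVF : forall s, S s -> F s^-1 -> s = 1).

Lemma card_setmulgD_finite : finite_set F ->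
  (#|` fset_set S| - 1 <= #|` fset_set (setmulg F S `\` F)|)%N.
Proof.
move=> fF; have [fFS FSE] := fset_set_setmulg fF fS.
rewrite fset_setD // FSE; apply: scherk_mulfsD; split; try exact/fset_setP.
move=> a b /fset_setP-/(_ fF) Fa /fset_setP-/(_ fS) Sb /mulg1_eq aE.
have b1 : b = 1 by apply: SVF; rewrite // -aE invgK.
by apply/eqP; rewrite -invg_eq1 aE b1.
Qed.

Lemma card_setmulgD_cofinite : finite_set (~` F) ->
  (#|` fset_set S| - 1 <= #|` fset_set (setmulg F S `\` F)|)%N.
Proof.
move=> fC; set C := fset_set (~` F); set X := fset_set (setmulg F S `\` F).
have fX : finite_set (setmulg F S `\` F) by apply: sub_finite_set fC => z [].
have XC : (X `<=` C)%fset by rewrite -fset_set_sub // => z [].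
set D := (C `\` X)%fset.
have memD z : z \in D -> ~ F z /\ ~ setmulg F S z.
  rewrite in_fsetD => /andP[zX /fset_setP-/(_ fC) zC]; split=> // FSz.
  by move/negP: zX; apply; apply/fset_setP.
set A : {fset G} := (1 |` D)%fset.
set B : {fset G} := [fset s^-1 | s in fset_set S]%fset.
have AB : scherk_pair A B.
  split; first by rewrite !inE eqxx.
    by apply/imfsetP; exists 1; [exact/fset_setP|rewrite invg1].
  move=> x _ /fset1UP[-> //|xD] /imfsetP[s /= /fset_setP-/(_ fS) Ss ->].
  move/mulg1_eq/invg_inj => xs.
  by case: (memD _ xD) => _ []; exists 1 => //; exists s; rewrite ?mul1g.
have ABC : (mulfs A B `<=` 1 |` C)%fset.
  apply/fsubsetP=> _ /mulfsP[x /fset1UP xA [_ /imfsetP[s /= /fset_setP-/(_ fS) Ss ->] ->]].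
  rewrite in_fset1U; apply/orP; case: xA => [->|xD].
    rewrite mul1g; have [->|s1] := eqVneq s 1; first by rewrite invg1; left.
    by right; apply/fset_setP => // Fs; move/eqP: s1; apply; apply: SVF.
  right; apply/fset_setP => // Fxs; case: (memD _ xD) => _; apply.
  by exists (x * s^-1) => //; exists s; rewrite ?mulgVK.
have card_A : #|` A| = (#|` C| - #|` X|).+1.
  have n1D : 1 \notin D by apply/negP => /memD[].
  by rewrite cardfsU1 cardfsDS // n1D.
have card_B : #|` B| = #|` fset_set S| by rewrite card_imfset //; apply: invg_inj.
have := fsubset_leq_card ABC; rewrite cardfsU1.
have := scherk AB; have := fsubset_leq_card XC.
rewrite card_A card_B; case: (1 \notin C) => /=; lia.
Qed.

End BoundaryOfProduct.

End ProductSets.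

Theorem corollary5p3 (G : groupType) (S F : set G) :
  finite_set S ->
  (finite_set F \/ finite_set (~` F)) ->
  F `&` setinvg S = [set 1] ->
  finite_set (setmulg F S `\` F) /\
  (#|` fset_set S| - 1 <= #|` fset_set (setmulg F S `\` F)|)%N.
Proof.
move=> fS fF /setI_setinvg_eq1[F1 S1 SVF]; case: fF => [fF|fC]; split.
- by apply: finite_setD; case: (fset_set_setmulg fF fS).
- exact: card_setmulgD_finite.
- by apply: sub_finite_set fC => z [].
- exact: card_setmulgD_cofinite.
Qed.
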